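(* There is an absolute constant $c>0$ such that the following holds. Let $(X,d)$ be a finite metric space with terminals $t_1,\dots,t_k$, $k\ge2$, let $\Delta>0$, and let $\Pi$ be the random partial partition produced by the truncated-exponential ball-carving procedure with parameters $\lambda=\Delta/\ln k$ and $\Delta$. If $P$ is a shortest path in $X$ with $d(P)<\lambda$, then for every $t\ge1$, $\Pr[Z_P>t]\le 2e^{-ct}$.
   Context: Truncated exponential $\mathrm{Texp}(\lambda,\Delta)$: the distribution on $[0,\Delta)$ with density $g(x)=\frac{1}{\lambda(1-e^{-\Delta/\lambda})}e^{-x/\lambda}$. $B(x,r)=\{y\in X:d(x,y)\le r\}$. Ball-carving procedure: for $j=1,\dots,k$ choose independently $R_j\sim\mathrm{Texp}(\lambda,\Delta)$, let $B_j=B(t_j,R_j)$ and $S_j=B_j\setminus\bigcup_{m<j}B_m$; output $\Pi=\{S_1,\dots,S_k\}\setminus\{\emptyset\}$. A shortest path is a sequence $P=(x_0,\dots,x_\ell)$ of points with $\sum_i d(x_{i-1},x_i)=d(x_0,x_\ell)$, of length $d(P)=d(x_0,x_\ell)$. $Z_P$ is the number of clusters $S\in\Pi$ with $S\cap P\neq\emptyset$. *)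

From Stdlib Require Import Reals.
From mathcomp Require Import all_boot.

Set Implicit Arguments.
Unset Strict Implicit.
Unset Printing Implicit Defensive.

Local Open Scope R_scope.

Definition is_metric (X : finType) (d : X -> X -> R) : Prop :=
  (forall x y, 0 <= d x y) /\
  (forall x y, d x y = 0 <-> x = y) /\
  (forall x y, d x y = d y x) /\
  (forall x y z, d x z <= d x y + d y z).

Definition texp_density (lam Delta x : R) : R :=
  / (lam * (1 - exp (- Delta / lam))) * exp (- x / lam).

Definition ball (X : finType) (d : X -> X -> R) (c : X) (r : R) : {set X} :=
  [set y | if Rle_dec (d c y) r then true else false].

Definition cluster (X : finType) (d : X -> X -> R) (k : nat)
  (term : 'I_k -> X) (rs : seq R) (j : 'I_k) : {set X} :=
  ball d (term j) (nth 0 rs j)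
    :\: \bigcup_(m : 'I_k | (nat_of_ord m < nat_of_ord j)%N) ball d (term m) (nth 0 rs m).

Definition carved_partition (X : finType) (d : X -> X -> R) (k : nat)
  (term : 'I_k -> X) (rs : seq R) : {set {set X}} :=
  [set cluster d term rs j | j : 'I_k] :\ set0.

Definition Z_P (X : finType) (d : X -> X -> R) (k : nat)
  (term : 'I_k -> X) (rs : seq R) (P : seq X) : nat :=
  #|[set S in carved_partition d term rs | S :&: [set x in P] != set0]|.

Fixpoint path_length (X : finType) (d : X -> X -> R) (x0 : X) (xs : seq X) : R :=
  match xs with
  | [::] => 0
  | y :: ys => d x0 y + path_length d y ys
  end.

Definition is_shortest_path (X : finType) (d : X -> X -> R) (x0 : X) (xs : seq X) : Prop :=
  path_length d x0 xs = d x0 (last x0 xs).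

Definition is_integral (f : R -> R) (a b v : R) : Prop :=
  exists pr : Riemann_integrable f a b, RiemannInt pr = v.

(* iid_expect lam Delta n F v : v = E[F(R_1,...,R_n)] for R_i iid Texp(lam,Delta),
   written as an iterated integral against the density. *)
Fixpoint iid_expect (lam Delta : R) (n : nat) (F : seq R -> R) (v : R) : Prop :=
  match n with
  | O => v = F [::]
  | S n' => exists h : R -> R,
      (forall x, 0 <= x < Delta -> iid_expect lam Delta n' (fun rs => F (x :: rs)) (h x)) /\
      is_integral (fun x => texp_density lam Delta x * h x) 0 Delta v
  end.

Definition prob_event (lam Delta : R) (n : nat) (E : seq R -> bool) (v : R) : Prop :=
  iid_expect lam Delta n (fun rs => if E rs then 1 else 0) v.

Definition Z_P_gt (X : finType) (d : X -> X -> R) (k : nat)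
  (term : 'I_k -> X) (P : seq X) (t : R) (rs : seq R) : bool :=
  if Rlt_dec t (INR (Z_P d term rs P)) then true else false.

From Pilot Require Import Defs.
From Stdlib Require Import Reals Lra Psatz FunctionalExtensionality ClassicalEpsilon.
From mathcomp Require Import all_boot.
From Coquelicot Require Import Coquelicot.
Set Implicit Arguments.
Unset Strict Implicit.
Local Open Scope R_scope.

(* With lam = Delta / ln k and radii R_1, ..., R_k iid Texp(lam, Delta), we
   show E[exp ((Z_P - t) / 10)] <= 2 e^{4/3} e^{-t/10}.  Since
   1[Z_P > t] <= exp ((Z_P - t) / 10), together with the trivial bound 1 this
   gives Pr[Z_P > t] <= 2 e^{-t/50}, i.e. the theorem with c = 1/50.

   The moment bound reveals the balls one at a time (the count [hits]).  Let U
   be the still uncovered part of P and D the distance from the next terminal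
   to U.  The ball misses U if R < D, covers all of U if R >= D + d(P), and
   otherwise adds at most one cluster.  As d(P) < lam, covering is nearly as
   likely as reaching U, which yields a growth factor 1 + alpha per terminal
   with alpha = 2/(3(k-1)), so the moment is at most 2 (1 + alpha)^k <= 2 e^{4/3}. *)

Lemma exp_mono x y : x <= y -> exp x <= exp y.
Proof.
move=> le_xy; case: (Req_dec x y) => [->|ne_xy]; first lra.
by left; apply: exp_increasing; lra.
Qed.

Lemma exp_pow x n : exp x ^ n = exp (INR n * x).
Proof.
elim: n => [|n IH]; first by rewrite /= Rmult_0_l exp_0.
by rewrite S_INR /= IH -exp_plus; f_equal; ring.
Qed.

Lemma exp_neg_ge_third s : 0 <= s < 1 -> 1/3 <= exp (- s).
Proof.
move=> Hs; rewrite exp_Ropp.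
have es3 : exp s <= 3 by apply: Rle_trans exp_le_3; apply: exp_mono; lra.
have := exp_pos s => es_pos.
apply: (Rmult_le_reg_r (exp s)) => //; rewrite Rinv_l; lra.
Qed.

(* The Stdlib Riemann integral behind [is_integral] agrees with Coquelicot's
   [is_RInt], in which all computations below are carried out. *)
Lemma is_integral_RInt f a b v : is_integral f a b v -> is_RInt f a b v.
Proof.
move=> [pr <-]; rewrite -RInt_Reals.
exact: (@RInt_correct R_CompleteNormedModule) (ex_RInt_Reals_1 _ _ _ pr).
Qed.

Lemma RInt_is_integral f a b v : is_RInt f a b v -> is_integral f a b v.
Proof.
move=> Hv; have Hex : ex_RInt f a b by exists v.
exists (ex_RInt_Reals_0 _ _ _ Hex); rewrite -RInt_Reals.
exact: (@is_RInt_unique R_CompleteNormedModule).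
Qed.

Lemma is_RInt_zero a b : is_RInt (fun _ => 0) a b 0.
Proof. by have := @is_RInt_const R_NormedModule a b 0; rewrite scal_zero_r. Qed.

Section TruncatedExponential.
Variables lam Delta : R.
Hypothesis lam_pos : 0 < lam.
Hypothesis Delta_pos : 0 < Delta.

Definition edge : R := exp (- Delta / lam).

Lemma edge_pos : 0 < edge.
Proof. exact: exp_pos. Qed.

Lemma edge_lt1 : edge < 1.
Proof.
rewrite /edge -exp_0; apply: exp_increasing.
have : 0 < Delta / lam by apply: Rdiv_lt_0_compat.
rewrite /Rdiv; lra.
Qed.

Definition dens (x : R) : R := texp_density lam Delta x.

Lemma dens_pos x : 0 < dens x.
Proof.
have := edge_lt1; rewrite /dens /texp_density -/edge => lt1.
apply: Rmult_lt_0_compat; last exact: exp_pos.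
apply/Rinv_0_lt_compat/Rmult_lt_0_compat; lra.
Qed.

Lemma dens_cont x : continuous dens x.
Proof.
apply: (@ex_derive_continuous R_AbsRing R_NormedModule).
rewrite /dens /texp_density; auto_derive; auto.
Qed.

Lemma int_dens u v :
  is_RInt dens u v ((exp (- u / lam) - exp (- v / lam)) / (1 - edge)).
Proof.
have := edge_lt1 => lt1.
pose G x := - exp (- x / lam) / (1 - edge).
have -> : (exp (- u / lam) - exp (- v / lam)) / (1 - edge) = minus (G v) (G u).
  by rewrite /minus /plus /opp /G /=; field; lra.
apply: (@is_RInt_derive R_CompleteNormedModule G) => x _; last exact: dens_cont.
rewrite /dens /texp_density -/edge /G; auto_derive; first exact: I.
by rewrite /Rdiv; field; split; lra.
Qed.

Lemma int_dens_total : is_RInt dens 0 Delta 1.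
Proof.
have := @int_dens 0 Delta; have := edge_lt1 => lt1.
have -> : exp (- 0 / lam) = 1 by rewrite /Rdiv Ropp_0 Rmult_0_l exp_0.
by rewrite -/edge /Rdiv Rinv_r //; lra.
Qed.

(* [tail u = Pr[R >= u]] for [u >= 0], with the indicator [ind u x = 1[u <= x]]. *)
Definition ind (u x : R) : R := if Rle_dec u x then 1 else 0.
Definition tail (u : R) : R := Rmax 0 ((exp (- u / lam) - edge) / (1 - edge)).

Lemma tail_ge0 u : 0 <= tail u.
Proof. exact: Rmax_l. Qed.

Lemma int_tail u : 0 <= u -> is_RInt (fun x => dens x * ind u x) 0 Delta (tail u).
Proof.
move=> u_ge0; have := edge_lt1 => lt1.
have exp_cmp : forall v w, v <= w -> exp (- w / lam) <= exp (- v / lam).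
  move=> v w le_vw; apply: exp_mono; rewrite /Rdiv -!Ropp_mult_distr_l.
  by apply/Ropp_le_contravar/Rmult_le_compat_r; first (left; apply: Rinv_0_lt_compat).
have ind_lo : forall x, x < u -> dens x * ind u x = 0.
  by move=> x ?; rewrite /ind; case: Rle_dec => /= ?; [lra | ring].
case: (Rlt_dec u Delta) => [lt_uD|ge_uD].
- have -> : tail u = plus 0 ((exp (- u / lam) - exp (- Delta / lam)) / (1 - edge)).
    rewrite /tail /plus /= Rplus_0_l -/edge; apply: Rmax_right.
    apply: Rmult_le_pos; last by left; apply: Rinv_0_lt_compat; lra.
    by have := exp_cmp u Delta (Rlt_le _ _ lt_uD); rewrite -/edge; lra.
  apply: (is_RInt_Chasles _ 0 u Delta).
  + apply: (is_RInt_ext (fun _ => 0)); last exact: is_RInt_zero.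
    by move=> x; rewrite Rmin_left ?Rmax_right // => -[_ ?]; rewrite ind_lo.
  + apply: (is_RInt_ext dens); last exact: int_dens.
    move=> x; rewrite Rmin_left ?Rmax_right; try lra; move=> [? _].
    by rewrite /ind; case: Rle_dec => /= ?; [ring | lra].
- have -> : tail u = 0.
    rewrite /tail; apply: Rmax_left; rewrite /Rdiv.
    have := exp_cmp Delta u (Rnot_lt_le _ _ ge_uD); rewrite -/edge => ?.
    by apply: Rmult_le_0_r; [lra | left; apply: Rinv_0_lt_compat; lra].
  apply: (is_RInt_ext (fun _ => 0)); last exact: is_RInt_zero.
  by move=> x; rewrite Rmin_left ?Rmax_right; try lra; move=> [_ ?]; rewrite ind_lo; lra.
Qed.

End TruncatedExponential.

Section Expectation.
Variables lam Delta : R.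
Hypothesis lam_pos : 0 < lam.
Hypothesis Delta_pos : 0 < Delta.

Local Notation dens := (dens lam Delta).
Local Notation E := (iid_expect lam Delta).

Lemma iid_ext n F G v : (forall rs, F rs = G rs) -> E n F v -> E n G v.
Proof. by move=> FG; have -> : G = F by apply: functional_extensionality => rs; rewrite FG. Qed.

Lemma iid_mono n : forall F G v w, E n F v -> E n G w ->
  (forall rs, F rs <= G rs) -> v <= w.
Proof.
elim: n => [|n IH] F G v w /=; first by move=> -> -> FG; exact: FG.
move=> [hF [HF IF]] [hG [HG IG]] FG.
apply: (is_RInt_le _ _ 0 Delta _ _ _ (is_integral_RInt IF) (is_integral_RInt IG)); first lra.
move=> x Hx; apply: Rmult_le_compat_l; first exact/Rlt_le/dens_pos.
by apply: (IH _ _ _ _ (HF x _) (HG x _)); try lra; move=> rs; exact: FG.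
Qed.

Lemma iid_uniq n F v w : E n F v -> E n F w -> v = w.
Proof.
move=> Hv Hw; apply: Rle_antisym; [apply: (iid_mono Hv Hw) | apply: (iid_mono Hw Hv)];
  move=> rs; lra.
Qed.

Lemma iid_const n c : E n (fun _ => c) c.
Proof.
elim: n => [|n IH] //=; exists (fun _ => c); split => //.
apply: RInt_is_integral.
have := is_RInt_scal _ _ _ c _ (int_dens_total lam_pos Delta_pos).
rewrite /scal /= /mult /= Rmult_1_r => Ic.
by apply: (is_RInt_ext _ _ _ _ _ _ Ic) => x _; rewrite Rmult_comm.
Qed.

Definition threshold_determined (T : list R) (F : seq R -> R) : Prop :=
  forall rs rs', (forall i tau, List.In tau T -> (tau <= nth 0 rs i <-> tau <= nth 0 rs' i)) ->
  F rs = F rs'.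

(* A function that is constant between consecutive thresholds of [T] is
   integrable against the density: split [a, b] at the thresholds. *)
Lemma ex_RInt_dens_step (T : list R) : forall a b (h : R -> R), a <= b ->
  (forall x y, a < x < b -> a < y < b ->
     (forall tau, List.In tau T -> (tau <= x <-> tau <= y)) -> h x = h y) ->
  ex_RInt (fun x => dens x * h x) a b.
Proof.
elim: T => [|tau T IH] a b h le_ab Hh.
- case: (Req_dec a b) => [<-|ne_ab]; first exact: ex_RInt_point.
  apply: (ex_RInt_ext (fun x => dens x * h ((a + b) / 2))).
    move=> x; rewrite Rmin_left ?Rmax_right; try lra; move=> Hx.
    by rewrite (Hh x ((a + b) / 2)) //; lra.
  apply: ex_RInt_continuous => z _.
  apply: (@ex_derive_continuous R_AbsRing R_NormedModule).
  by rewrite /dens /texp_density; auto_derive.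
- have Hcut : forall a' b', a <= a' -> b' <= b -> a' <= b' ->
      (tau <= a' \/ b' <= tau) -> ex_RInt (fun x => dens x * h x) a' b'.
    move=> a' b' ? ? ? Htau; apply: IH => // x y Hx Hy HT; apply: Hh; try lra.
    by move=> s [<-|Hs]; [lra | exact: HT].
  case: (Rlt_dec a tau) => [lt_a|ge_a]; last by apply: Hcut; lra.
  case: (Rlt_dec tau b) => [lt_b|ge_b]; last by apply: Hcut; lra.
  by apply: (ex_RInt_Chasles _ a tau b); apply: Hcut; lra.
Qed.

Lemma iid_const_value n G c u : (forall rs, G rs = c) -> E n G u -> u = c.
Proof.
move=> Gc Hu; apply: (iid_uniq Hu).
by apply: iid_ext (iid_const n c) => rs; rewrite Gc.
Qed.

Lemma iid_exists T n : forall F, threshold_determined T F -> exists v, E n F v.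
Proof.
elim: n => [|n IH] F HF /=; first by exists (F [::]).
have HFx : forall x, threshold_determined T (fun rs => F (x :: rs)).
  by move=> x rs rs' H; apply: HF => -[|i] tau Ht /=; [lra | exact: H].
pose h x := proj1_sig (constructive_indefinite_description _ (IH _ (HFx x))).
have Hh : forall x, E n (fun rs => F (x :: rs)) (h x).
  by move=> x; rewrite /h; case: constructive_indefinite_description.
have Hex : ex_RInt (fun x => dens x * h x) 0 Delta.
  apply: (@ex_RInt_dens_step T); first lra.
  move=> x y _ _ HT; apply: (iid_uniq (Hh x)).
  apply: (iid_ext _ (Hh y)) => rs; apply: HF => -[|i] tau Ht //=.
  by have := HT tau Ht; tauto.
exists (RInt (fun x => dens x * h x) 0 Delta), h; split => //.
exact/RInt_is_integral/(@RInt_correct R_CompleteNormedModule).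
Qed.

End Expectation.

Lemma mem_In (T : eqType) (x : T) (s : seq T) : x \in s -> List.In x s.
Proof.
elim: s => [|a s IH] //; rewrite in_cons => /orP [/eqP ->|/IH]; [left | right] => //.
Qed.

Lemma seq_argmin (T : eqType) (f : T -> R) (s : seq T) :
  s != [::] -> exists2 y, y \in s & forall z, z \in s -> f y <= f z.
Proof.
elim: s => [|a s IH] // _; case: (eqVneq s [::]) => [->|/IH [y ys ymin]].
- by exists a; rewrite ?mem_head // => z; rewrite mem_seq1 => /eqP ->; lra.
- case: (Rle_dec (f a) (f y)) => [le_ay|lt_ya].
  + exists a; first exact: mem_head.
    by move=> z; rewrite in_cons => /orP [/eqP ->|/ymin]; lra.
  + exists y; first by rewrite in_cons ys orbT.
    by move=> z; rewrite in_cons => /orP [/eqP ->|/ymin]; lra.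
Qed.

Lemma set_argmin (T : finType) (f : T -> R) (U : {set T}) :
  U != set0 -> exists2 y, y \in U & forall z, z \in U -> f y <= f z.
Proof.
move=> /set0Pn [x xU]; have [|y] := seq_argmin f (s := enum U).
  by apply/eqP => eU; move: xU; rewrite -mem_enum eU.
by rewrite mem_enum => yU ymin; exists y => // z; rewrite -mem_enum => /ymin.
Qed.

Section SequentialCarving.
Variable X : finType.
Variable d : X -> X -> R.

Lemma in_ball c r y : (y \in Defs.ball d c r) <-> d c y <= r.
Proof. by rewrite /Defs.ball inE; case: Rle_dec. Qed.

Definition carved_ball (tf : nat -> X) (rs : seq R) (i : nat) : {set X} :=
  Defs.ball d (tf i) (nth 0 rs i).

(* [hits U tf n rs] carves the balls [0, ..., n-1] one at a time and counts
   those that meet the part of [U] not yet covered; the recursion reveals the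
   first radius and continues with the uncovered remainder of [U]. *)
Fixpoint hits (U : {set X}) (tf : nat -> X) (n : nat) (rs : seq R) : nat :=
  match n with
  | O => 0%N
  | S n' => ((U :&: carved_ball tf rs 0 != set0) +
             hits (U :\: carved_ball tf rs 0) (fun i => tf i.+1) n' (behead rs))%N
  end.

Lemma hits_set0 tf n rs : hits set0 tf n rs = 0%N.
Proof. by elim: n tf rs => [|n IH] tf rs //=; rewrite set0I eqxx set0D IH. Qed.

Lemma hits_sum n : forall U tf rs, hits U tf n rs =
  (\sum_(0 <= j < n) (carved_ball tf rs j :&: (U :\: \bigcup_(0 <= m < j) carved_ball tf rs m)
                      != set0))%N.
Proof.
elim: n => [|n IH] U tf rs; first by rewrite big_geq.
rewrite /= IH big_nat_recl //= [\bigcup_(0 <= m < 0) _]big_geq // setD0 setIC; congr addn.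
have shift i : carved_ball (fun i0 => tf i0.+1) (behead rs) i = carved_ball tf rs i.+1.
  by rewrite /carved_ball nth_behead.
apply: eq_bigr => j _; rewrite big_nat_recl // setDDl shift.
by under eq_bigr => i _ do rewrite shift.
Qed.

(* Each cluster is its ball minus all earlier balls, so a nonempty cluster
   determines its index. *)
Lemma cluster_inj k (term : 'I_k -> X) rs (i j : 'I_k) :
  cluster d term rs i != set0 -> cluster d term rs i = cluster d term rs j -> i = j.
Proof.
have earlier (i' j' : 'I_k) : cluster d term rs i' != set0 ->
    cluster d term rs i' = cluster d term rs j' -> (i' < j')%N -> False.
  move=> /set0Pn [x Hx] Cij lt_ij; move: (Hx).
  rewrite Cij /cluster in_setD => /andP [/negP nx _]; apply: nx.
  move: Hx; rewrite /cluster in_setD => /andP [_ Hx].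
  exact: (subsetP (bigcup_sup i' lt_ij)).
move=> Hi Cij; case: (ltngtP i j) => [lt_ij|lt_ji|/val_inj //].
- by case: (earlier i j).
- by case: (earlier j i) => //; rewrite -Cij.
Qed.

Lemma Z_P_hits k (term : 'I_k.+1 -> X) rs (P : seq X) :
  Z_P d term rs P = hits [set x in P] (fun i => term (inord i)) k.+1 rs.
Proof.
set Ps := [set x in P]; set tf := fun i => term (inord i); set C := cluster d term rs.
have C_def (j : 'I_k.+1) :
    C j = carved_ball tf rs j :\: \bigcup_(0 <= m < j) carved_ball tf rs m.
  rewrite /C /cluster /carved_ball /tf inord_val big_mkord.
  rewrite (big_ord_widen k.+1 (fun m => Defs.ball d (term (inord m)) (nth 0 rs m))); last exact: ltnW.
  by congr (_ :\: _); apply: eq_bigr => m _; rewrite inord_val.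
have met_clusters : [set S in carved_partition d term rs | S :&: Ps != set0] =
    C @: [set j | C j :&: Ps != set0].
  apply/setP => S; rewrite !inE; apply/andP/imsetP.
  - by move=> [/andP [_ /imsetP [j _ ->]] HjP]; exists j; rewrite ?inE.
  - move=> [j]; rewrite inE => HjP ->; split=> //.
    by rewrite imset_f // andbT; apply: contraNneq HjP => ->; rewrite set0I.
rewrite /Z_P -/Ps met_clusters card_in_imset; last first.
  move=> i j; rewrite !inE /C => Hi _; apply: cluster_inj.
  by apply: contraNneq Hi => ->; rewrite set0I.
rewrite hits_sum -sum1dep_card big_mkcond /= big_mkord; apply: eq_bigr => j _.
have -> : C j :&: Ps = carved_ball tf rs j :&: (Ps :\: \bigcup_(0 <= m < j) carved_ball tf rs m).
  by rewrite C_def !setDE -setIA [~: _ :&: Ps]setIC.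
by case: (_ != set0).
Qed.

Definition diam_le (U : {set X}) (L : R) : Prop :=
  forall y z, y \in U -> z \in U -> d y z <= L.

Lemma diam_le_subset (U V : {set X}) L : V \subset U -> diam_le U L -> diam_le V L.
Proof. by move=> /subsetP VU HU y z /VU yU /VU zU; exact: HU. Qed.

Lemma ball_misses c (U : {set X}) r :
  (forall z, z \in U -> r < d c z) -> U :&: Defs.ball d c r = set0.
Proof.
move=> far; apply/setP => z; rewrite in_setI in_set0.
by apply/negbTE/negP => /andP [/far ? /in_ball ?]; lra.
Qed.

Lemma ball_covers c (U : {set X}) r y0 L : is_metric d ->
  y0 \in U -> diam_le U L -> d c y0 + L <= r -> U \subset Defs.ball d c r.
Proof.
move=> [_ [_ [_ tri]]] y0U HU le_r; apply/subsetP => y yU; apply/in_ball.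
by have := tri c y0 y; have := HU _ _ y0U yU; lra.
Qed.

End SequentialCarving.

Section MomentBound.
Variables lam Delta : R.
Hypothesis lam_pos : 0 < lam.
Hypothesis Delta_pos : 0 < Delta.

Local Notation edge := (edge lam Delta).
Local Notation tail := (tail lam Delta).
Local Notation dens := (dens lam Delta).

(* [theta = e^{1/10}]: one more cluster multiplies [exp (Z/10)] by [theta]. *)
Definition theta : R := exp (1/10).

Lemma theta_gt1 : 1 < theta.
Proof. by have := exp_ineq1 (1/10); rewrite /theta; lra. Qed.

Lemma theta_le : theta <= 10/9.
Proof.
have := exp_ineq1_le (- (1/10)); rewrite exp_Ropp -/theta => H.
have := theta_gt1 => ?; apply: (Rmult_le_reg_r (/ theta)).
  by apply: Rinv_0_lt_compat; lra.
by rewrite Rinv_r; nra.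
Qed.

(* The growth factor per terminal is [1 + alpha]; after [n] terminals the
   exponential moment is at most [moment_bound n]. *)
Definition alpha : R := 2/3 * (edge / (1 - edge)).
Definition moment_bound (n : nat) : R := 2 * (1 + alpha) ^ n.

Lemma alpha_ge0 : 0 <= alpha.
Proof.
have := edge_lt1 lam_pos Delta_pos; have := edge_pos lam Delta => ? ?.
by apply/Rmult_le_pos/Rlt_le/Rdiv_lt_0_compat; lra.
Qed.

Lemma moment_bound_ge2 n : 2 <= moment_bound n.
Proof.
have := pow_R1_Rle (1 + alpha) n; have := alpha_ge0.
by rewrite /moment_bound => ? H; have := H ltac:(lra); lra.
Qed.

(* If the next ball first reaches [U] at radius [D]
   and the remaining moment is at most [V], revealing the radius gives at most
   [V] when it misses, [theta V] when it is partial, and [theta] when it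
   covers [U]; the left side is this average.  A partial hit has probability
   [tail D - tail (D + L)], which is small against the covering probability
   [tail (D + L) >= tail D / 3 - O(edge)] because [L < lam]. *)
Lemma step_factor D L V : 0 <= D -> 0 <= L < lam -> 2 <= V ->
  V + (theta - 1) * V * tail D + theta * (1 - V) * tail (D + L) <= (1 + alpha) * V.
Proof.
move=> D_ge0 HL V_ge2.
have e1 := edge_lt1 lam_pos Delta_pos; have e0 := edge_pos lam Delta.
have t1 := theta_gt1; have t2 := theta_le.
have tD := tail_ge0 lam Delta D; have tDL := tail_ge0 lam Delta (D + L).
have inv_pos : 0 < / (1 - edge) by apply: Rinv_0_lt_compat; lra.
suff key : (theta - 1) * V * tail D + theta * (1 - V) * tail (D + L) <= alpha * V by lra.
set q := exp (- D / lam); have q_pos : 0 < q by exact: exp_pos.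
case: (Rlt_dec q (7 * edge)) => [q_small|q_large].
- (* rarely reached ball: [tail D <= 6 edge / (1 - edge)] *)
  have tD_small : tail D <= 6 * edge / (1 - edge).
    apply: Rmax_lub; first by apply: Rmult_le_pos; lra.
    by apply: Rmult_le_compat_r; [lra | rewrite -/q; lra].
  have : (theta - 1) * tail D <= alpha.
    by rewrite /alpha; apply: Rle_trans (_ : 1/9 * (6 * edge / (1 - edge)) <= _);
      [apply: Rmult_le_compat; lra | right; field; lra].
  have : 0 <= theta * (V - 1) * tail (D + L) by apply: Rmult_le_pos; nra.
  nra.
- (* likely reached ball: the covering probability dominates *)
  set w := exp (- (D + L) / lam).
  have w_ge : q / 3 <= w.
    have -> : w = q * exp (- (L / lam)) by rewrite /w /q -exp_plus; f_equal; field; lra.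
    have : 1/3 <= exp (- (L / lam)).
      apply: exp_neg_ge_third; split; first by apply: Rdiv_le_0_compat; lra.
      by apply: (Rmult_lt_reg_r lam) => //; rewrite /Rdiv Rmult_assoc Rinv_l; lra.
    nra.
  have -> : tail D = (q - edge) / (1 - edge).
    by rewrite /tail -/q; apply: Rmax_right; apply: Rmult_le_pos; lra.
  have -> : tail (D + L) = (w - edge) / (1 - edge).
    by rewrite /tail -/w; apply: Rmax_right; apply: Rmult_le_pos; lra.
  have cover : 2 * ((theta - 1) * (q - edge)) <= theta * (w - edge).
    have : (theta - 1) * (q - edge) <= 1/9 * (q - edge) by apply: Rmult_le_compat_r; lra.
    nra.
  have : (theta - 1) * V * (q - edge) + theta * (1 - V) * (w - edge) <= 0.
    have : 0 <= (V - 2) * (theta * (w - edge) - (theta - 1) * (q - edge)).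
      by apply: Rmult_le_pos; nra.
    nra.
  have : 0 <= alpha * V by have := alpha_ge0; nra.
  rewrite /Rdiv; nra.
Qed.

Definition profile (D L V x : R) : R :=
  V + (theta - 1) * V * ind D x + theta * (1 - V) * ind (D + L) x.

Lemma profile_below D L V x : 0 <= L -> x < D -> profile D L V x = V.
Proof. by move=> ? ?; rewrite /profile /ind; case: Rle_dec => ?; case: Rle_dec => ? /=; try lra; ring. Qed.

Lemma profile_middle D L V x : D <= x < D + L -> profile D L V x = theta * V.
Proof. by move=> ?; rewrite /profile /ind; case: Rle_dec => ?; case: Rle_dec => ? /=; try lra; ring. Qed.

Lemma profile_above D L V x : 0 <= L -> D + L <= x -> profile D L V x = theta.
Proof. by move=> ? ?; rewrite /profile /ind; case: Rle_dec => ?; case: Rle_dec => ? /=; try lra; ring. Qed.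

Lemma int_profile c D L V : 0 <= D -> 0 <= L ->
  is_RInt (fun x => dens x * (c * profile D L V x)) 0 Delta
    (c * (V + (theta - 1) * V * tail D + theta * (1 - V) * tail (D + L))).
Proof.
move=> D_ge0 L_ge0.
have I1 := is_RInt_scal _ _ _ (c * V) _ (int_dens_total lam_pos Delta_pos).
have I2 := is_RInt_scal _ _ _ (c * ((theta - 1) * V)) _ (int_tail lam_pos Delta_pos D_ge0).
have I3 := is_RInt_scal _ _ _ (c * (theta * (1 - V))) _
             (int_tail lam_pos Delta_pos (Rplus_le_le_0_compat _ _ D_ge0 L_ge0)).
have I := is_RInt_plus _ _ _ _ _ _ (is_RInt_plus _ _ _ _ _ _ I1 I2) I3.
have -> : c * (V + (theta - 1) * V * tail D + theta * (1 - V) * tail (D + L)) =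
    plus (plus (scal (c * V) 1) (scal (c * ((theta - 1) * V)) (tail D)))
         (scal (c * (theta * (1 - V))) (tail (D + L))).
  by rewrite /plus /scal /= /mult /=; ring.
by apply: (is_RInt_ext _ _ _ _ _ _ I) => x _; rewrite /profile /plus /scal /= /mult /=; ring.
Qed.

Variable X : finType.
Variable d : X -> X -> R.
Hypothesis d_metric : is_metric d.
Variable L : R.
Hypothesis L_range : 0 <= L < lam.

Definition moment_bounded (n : nat) : Prop :=
  forall tf (U : {set X}) a v F, diam_le d U L ->
  (forall rs, F rs = exp ((a + INR (hits d U tf n rs)) / 10)) ->
  iid_expect lam Delta n F v -> v <= exp (a / 10) * moment_bound n.

(* Conditioned on the first radius [x], the remaining moment follows the
   profile: miss below [D], at most one hit below [D + L], full cover above. *)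
Lemma conditional_moment n tf (U : {set X}) a F y0 x h :
  moment_bounded n -> diam_le d U L -> y0 \in U ->
  (forall z, z \in U -> d (tf 0%N) y0 <= d (tf 0%N) z) ->
  (forall rs, F rs = exp ((a + INR (hits d U tf n.+1 rs)) / 10)) ->
  iid_expect lam Delta n (fun rs => F (x :: rs)) h ->
  h <= exp (a / 10) * profile (d (tf 0%N) y0) L (moment_bound n) x.
Proof.
move=> IH HU y0U y0min HF Hh; set D := d (tf 0%N) y0; set B := Defs.ball d (tf 0%N) x.
have HFx rs : F (x :: rs) =
    exp ((a + INR (U :&: B != set0) + INR (hits d (U :\: B) (fun i => tf i.+1) n rs)) / 10).
  by rewrite HF /= plus_INR Rplus_assoc.
have HUB : diam_le d (U :\: B) L by apply: diam_le_subset HU; exact: subsetDl.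
have IHx := IH _ _ _ _ _ HUB HFx Hh.
have := moment_bound_ge2 n; have := exp_pos (a / 10) => ? ?.
case: (Rlt_dec x D) => [lt_xD|ge_xD].
  rewrite profile_below //; last exact: (proj1 L_range).
  move: IHx; rewrite ball_misses /= ?eqxx ?Rplus_0_r // => z /y0min.
  by rewrite -/D; lra.
case: (Rlt_dec x (D + L)) => [lt_xDL|ge_xDL].
  (* the ball meets [U] partially: at most one new cluster *)
  rewrite profile_middle; last lra.
  apply: Rle_trans IHx _; rewrite -Rmult_assoc; apply: Rmult_le_compat_r; first lra.
  by rewrite /theta -exp_plus; apply: exp_mono; case: (_ != set0) => /=; lra.
(* the ball covers [U]: exactly one new cluster, none afterwards *)
have UB : U \subset B by apply: (ball_covers d_metric y0U HU); rewrite -/D; lra.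
rewrite profile_above; [right | lra | lra].
apply: (iid_const_value lam_pos Delta_pos _ Hh) => rs; rewrite HFx.
have -> : U :\: B = set0 by apply/eqP; rewrite setD_eq0.
have -> : (U :&: B != set0) = true by apply/set0Pn; exists y0; rewrite inE y0U (subsetP UB).
by rewrite hits_set0 /theta -exp_plus /=; f_equal; field.
Qed.

(* Averaging the profile over the first radius and applying the one-step
   inequality multiplies the bound by [1 + alpha]. *)
Lemma moment_step n : moment_bounded n -> moment_bounded n.+1.
Proof.
move=> IH tf U a v F HU HF Hv.
have := moment_bound_ge2 n; have := exp_pos (a / 10) => ? ?.
case: (eqVneq U set0) => [U0|U_ne].
  rewrite (iid_const_value lam_pos Delta_pos (c := exp (a / 10)) _ Hv).
    by have := moment_bound_ge2 n.+1; nra.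
  by move=> rs; rewrite HF U0 hits_set0 /= Rplus_0_r.
(* [D]: radius at which the first ball starts meeting [U] *)
have [y0 y0U y0min] := set_argmin (d (tf 0%N)) U_ne.
have D_ge0 : 0 <= d (tf 0%N) y0 by apply: (proj1 d_metric).
move: Hv => /= [h [Hh Hint]].
have Iprof := int_profile (c := exp (a / 10)) (V := moment_bound n) D_ge0 (proj1 L_range).
apply: Rle_trans (is_RInt_le _ _ 0 Delta _ _ _ (is_integral_RInt Hint) Iprof _) _; first lra.
  move=> x Hx; apply: Rmult_le_compat_l; first exact/Rlt_le/dens_pos.
  exact: (conditional_moment IH HU y0U y0min HF (Hh x ltac:(lra))).
have -> : moment_bound n.+1 = (1 + alpha) * moment_bound n by rewrite /moment_bound /=; ring.
apply: Rmult_le_compat_l; first lra.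
exact: step_factor.
Qed.

Lemma moment_bound_hits n : moment_bounded n.
Proof.
elim: n => [|n IH]; last exact: moment_step.
move=> tf U a v F _ HF /= ->; rewrite HF /= Rplus_0_r /moment_bound /=.
by have := exp_pos (a / 10); lra.
Qed.

End MomentBound.

Section PathsAndThresholds.
Variable X : finType.
Variable d : X -> X -> R.
Hypothesis d_metric : is_metric d.

Lemma path_length_ge0 x0 xs : 0 <= path_length d x0 xs.
Proof.
elim: xs x0 => [|x1 xs IH] x0 /=; first lra.
by have := IH x1; have := proj1 d_metric x0 x1; lra.
Qed.

Lemma path_diam x0 xs : diam_le d [set x in x0 :: xs] (path_length d x0 xs).
Proof.
have [d_ge0 [d_eq0 [d_sym d_tri]]] := d_metric.
have d_xx x : d x x = 0 by apply/d_eq0.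
elim: xs x0 => [|x1 xs IH] x0 y z; rewrite !in_set.
  by rewrite !mem_seq1 => /eqP -> /eqP ->; rewrite d_xx /=; lra.
have := path_length_ge0 x1 xs; have := d_ge0 x0 x1.
have inP1 w : w \in x1 :: xs -> w \in [set x in x1 :: xs] by rewrite in_set.
have Hx1 := inP1 x1 (mem_head _ _).
rewrite ![_ \in x0 :: _]in_cons => ? ? /orP [/eqP ->|/inP1 Hy] /orP [/eqP ->|/inP1 Hz] /=.
- by rewrite d_xx; lra.
- by have := IH x1 x1 z Hx1 Hz; have := d_tri x0 x1 z; lra.
- by have := IH x1 x1 y Hx1 Hy; have := d_tri x0 x1 y; rewrite (d_sym y x0); lra.
- by have := IH x1 y z Hy Hz; lra.
Qed.

(* All distances of [X]: the only thresholds a radius is ever compared with. *)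
Definition distances : list R :=
  List.flat_map (fun a => List.map (d a) (enum X)) (enum X).

Lemma in_distances a b : List.In (d a b) distances.
Proof.
apply/List.in_flat_map; exists a; split; first by apply: mem_In; rewrite mem_enum.
by apply: List.in_map; apply: mem_In; rewrite mem_enum.
Qed.

Lemma hits_balls n : forall U tf rs rs',
  (forall i, carved_ball d tf rs i = carved_ball d tf rs' i) -> hits d U tf n rs = hits d U tf n rs'.
Proof.
elim: n => [|n IH] U tf rs rs' Eballs //=; rewrite Eballs; congr addn.
by apply: IH => i; rewrite /carved_ball !nth_behead; exact: Eballs i.+1.
Qed.

Lemma Z_P_threshold_determined k (term : 'I_k.+1 -> X) (P : seq X) (g : nat -> R) :
  threshold_determined distances (fun rs => g (Z_P d term rs P)).
Proof.
move=> rs rs' Hthr; rewrite !Z_P_hits; congr g; apply: hits_balls => i.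
apply/setP => y; apply/idP/idP => /in_ball H; apply/in_ball;
  by have := Hthr i _ (in_distances (term (inord i)) y); tauto.
Qed.

End PathsAndThresholds.

Lemma indicator_le_exp t (z : R) :
  (if (if Rlt_dec t z then true else false) then 1 else 0) <= exp ((- t + z) / 10).
Proof.
case: Rlt_dec => [lt_tz|_] /=; last exact/Rlt_le/exp_pos.
by have := exp_ineq1_le ((- t + z) / 10); lra.
Qed.

(* With [lam = Delta / ln k] one has [edge = 1/k] and [alpha = 2/(3(k-1))],
   so the moment bound after [k] terminals is at most [2 e^{4/3}]. *)
Lemma moment_bound_log_scale Delta k : 0 < Delta -> (2 <= k)%N ->
  moment_bound (Delta / ln (INR k)) Delta k <= 2 * exp (4/3).
Proof.
move=> D_pos k_ge2; set K := INR k.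
have K_ge2 : 2 <= K by rewrite /K (_ : 2 = INR 2) //; apply/le_INR/leP.
have lnK : 0 < ln K by rewrite -ln_1; apply: ln_increasing; lra.
have edgeK : edge (Delta / ln K) Delta = / K.
  rewrite /edge (_ : - Delta / (Delta / ln K) = - ln K); last by field; lra.
  by rewrite exp_Ropp exp_ln //; lra.
rewrite /moment_bound /alpha edgeK.
have -> : 2 / 3 * (/ K / (1 - / K)) = 2 / (3 * (K - 1)) by field; lra.
apply: Rmult_le_compat_l; first lra.
apply: Rle_trans (_ : exp (2 / (3 * (K - 1))) ^ k <= _).
  by apply: pow_incr; have := exp_ineq1_le (2 / (3 * (K - 1))); split;
    [apply/Rlt_le/Rplus_lt_0_compat; [lra | apply: Rdiv_lt_0_compat; lra] | lra].
rewrite exp_pow -/K; apply: exp_mono.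
apply: (Rmult_le_reg_r (3 * (K - 1))); first lra.
by rewrite Rmult_assoc /Rdiv Rmult_assoc Rinv_l; lra.
Qed.

Lemma tail_from_moment t p w : p <= 1 -> p <= w ->
  w <= exp (- t / 10) * (2 * exp (4/3)) -> p <= 2 * exp (- (1/50) * t).
Proof.
move=> p_le1 p_le_w w_le.
case: (Rle_dec (50/3) t) => [t_large|t_small].
- apply: (Rle_trans _ _ _ p_le_w); apply: (Rle_trans _ _ _ w_le).
  rewrite Rmult_comm Rmult_assoc -exp_plus; apply: Rmult_le_compat_l; first lra.
  by apply: exp_mono; lra.
- (* [e^{1/3} < 2] since [e^{1/3}]^3 = e <= 3 < 8 *)
  have e13 : exp (1/3) < 2.
    have cube : exp (1/3) ^ 3 = exp 1 by rewrite exp_pow; f_equal; simpl; field.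
    have := exp_le_3; have := exp_pos (1/3) => ? ?.
    case: (Rlt_dec (exp (1/3)) 2) => // ge2; exfalso.
    have : 2 ^ 3 <= exp (1/3) ^ 3 by apply: pow_incr; lra.
    by rewrite cube /=; lra.
  apply: (Rle_trans _ _ _ p_le1).
  have : exp (- (1/3)) <= exp (- (1/50) * t) by apply: exp_mono; lra.
  rewrite exp_Ropp; have := exp_pos (1/3) => ?.
  have : / 2 < / exp (1/3) by apply: Rinv_lt_contravar; nra.
  lra.
Qed.

Theorem mainTheorem4 :
  exists c : R, 0 < c /\
  forall (X : finType) (d : X -> X -> R) (k : nat) (term : 'I_k -> X)
         (Delta : R) (x0 : X) (xs : seq X) (t : R),
    is_metric d -> (2 <= k)%N -> injective term -> 0 < Delta ->
    is_shortest_path d x0 xs ->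
    d x0 (last x0 xs) < Delta / ln (INR k) ->
    1 <= t ->
    exists p : R,
      prob_event (Delta / ln (INR k)) Delta k (Z_P_gt d term (x0 :: xs) t) p /\
      p <= 2 * exp (- c * t).
Proof.
exists (1/50); split; first lra.
move=> X d k term Delta x0 xs t d_metric k_ge2 _ Delta_pos shortest short _.
case: k term k_ge2 short => [|k] term // k_ge2 short.
set lam := Delta / ln (INR k.+1); set P := x0 :: xs; set L := d x0 (last x0 xs).
have lam_pos : 0 < lam.
  apply: Rdiv_lt_0_compat => //; rewrite -ln_1; apply: ln_increasing; first lra.
  by rewrite (_ : 1 = INR 1) //; apply/lt_INR/ltP.
have L_range : 0 <= L < lam by split; [exact: (proj1 d_metric) | exact: short].
have diamP : diam_le d [set x in P] L by rewrite /L -shortest; exact: path_diam.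
(* the probability [p] and the exponential moment [w = E[exp ((Z_P - t) / 10)]] *)
have [p Hp] := iid_exists lam_pos Delta_pos k.+1 (Z_P_threshold_determined (d := d) term P
  (fun n => if (if Rlt_dec t (INR n) then true else false) then 1 else 0)).
have [w Hw] := iid_exists lam_pos Delta_pos k.+1
  (Z_P_threshold_determined (d := d) term P (fun n => exp ((- t + INR n) / 10))).
exists p; split; first exact: Hp.
apply: (tail_from_moment (w := w)).
- apply: (iid_mono lam_pos Delta_pos Hp (iid_const lam_pos Delta_pos _ 1)) => rs.
  by case: Rlt_dec => _ /=; lra.
- by apply: (iid_mono lam_pos Delta_pos Hp Hw) => rs; exact: indicator_le_exp.
- have w_le : w <= exp (- t / 10) * moment_bound lam Delta k.+1.
    apply: (moment_bound_hits lam_pos Delta_pos d_metric L_range diamP _ Hw) => rs.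
    by rewrite Z_P_hits.
  apply: (Rle_trans _ _ _ w_le); apply: Rmult_le_compat_l; first exact/Rlt_le/exp_pos.
  exact: moment_bound_log_scale.
Qed.
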